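(* Let $p,q\geq 3$, let $K_p$ be the complete graph on $p$ vertices and $C_q$ the cycle on $q$ vertices. Then $\mathrm{mbt}(K_p\Box C_q)\geq \Delta(K_p\Box C_q)+1$.
   Context: A book embedding of a graph $G$ consists of a linear ordering of $V(G)$ (the vertices placed on the spine) together with an assignment of each edge to one of a set of pages such that no two edges on the same page cross, i.e. there are no two edges $uv$, $xy$ on the same page with $u<x<v<y$ in the ordering. A book embedding is matching if on every page each vertex is incident with at most one edge of that page. The matching book thickness $\mathrm{mbt}(G)$ is the minimum number of pages over all matching book embeddings of $G$. $\Delta(G)$ denotes the maximum degree of $G$. The Cartesian product $G\Box B$ has vertex set $V(G)\times V(B)$, with $(u_1,v_1)$ adjacent to $(u_2,v_2)$ iff either $u_1=u_2$ and $v_1v_2\in E(B)$, or $v_1=v_2$ and $u_1u_2\in E(G)$. *)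

(* Simple graphs are symmetric irreflexive relations on a finType. *)
From mathcomp Require Import all_boot.
Set Implicit Arguments. Unset Strict Implicit. Unset Printing Implicit Defensive.

Definition complete_graph (p : nat) : rel 'I_p := fun x y => x != y.

Definition cycle_graph (q : nat) : rel 'I_q :=
  fun x y => (x != y) && ((y == (x.+1 %% q) :> nat) || (x == (y.+1 %% q) :> nat)).

Definition cart_prod (V W : finType) (G : rel V) (B : rel W) : rel (V * W) :=
  fun a b => ((a.1 == b.1) && B a.2 b.2) || ((a.2 == b.2) && G a.1 b.1).

Definition max_degree (V : finType) (G : rel V) : nat :=
  \max_(v : V) #|[set w | G v w]|.

(* A matching book embedding of G with k pages: an injective spine position
   pos (a linear order of V) and a page assignment pg of edges (symmetric on
   edges) such that no two edges on the same page cross, and every vertex is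
   incident with at most one edge of each page. *)
Definition matching_book_embedding (V : finType) (G : rel V) (k : nat)
    (pos : V -> nat) (pg : V -> V -> 'I_k) : Prop :=
  [/\ injective pos,
      (forall u v, G u v -> pg u v = pg v u),
      (forall u v x y, G u v -> G x y -> pg u v = pg x y ->
          ~ [/\ pos u < pos x, pos x < pos v & pos v < pos y])
    & (forall u v w, G u v -> G u w -> pg u v = pg u w -> v = w)].

Definition has_mbe (V : finType) (G : rel V) (k : nat) : Prop :=
  exists pos pg, @matching_book_embedding V G k pos pg.

Arguments complete_graph p : clear implicits.
Arguments cycle_graph q : clear implicits.

(* In a matching book embedding the d edges at a vertex lie on distinct pages,
   so if G is d-regular and there are only k <= d pages, every vertex has an
   edge on every page.  Then for an edge uv on page i, the page-i partner map is a
   fixed-point-free involution of the vertices strictly between u and v (an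
   edge leaving that interval would cross uv), so their number is even.  Hence
   the parity of the spine rank is a proper 2-colouring of G, which is
   impossible when G contains a triangle, as K_p [] C_q does for p >= 3.
   Since K_p [] C_q is (p+1)-regular, it needs at least p + 2 pages. *)
From mathcomp Require Import all_boot zify.
Set Implicit Arguments. Unset Strict Implicit. Unset Printing Implicit Defensive.

Lemma fixpointfree_involution_card_even (T : finType) (f : T -> T) (S : {set T}) :
  {in S, forall x, f x \in S} -> {in S, involutive f} ->
  {in S, forall x, f x != x} -> ~~ odd #|S|.
Proof.
elim: {S}_.+1 {-2}S (ltnSn #|S|) => // n IHn S ltSn fS fK fx.
have [-> | [x xS]] := set_0Vmem S; first by rewrite cards0.
have fxS : f x \in S :\ x by rewrite !inE fx // fS.
have cardS : #|S| = #|S :\ x :\ f x|.+2.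
  by rewrite (cardsD1 x S) xS (cardsD1 (f x) (S :\ x)) fxS.
have S'P y : y \in S :\ x :\ f x -> [/\ y != f x, y != x & y \in S].
  by rewrite !inE => /and3P.
rewrite cardS /= negbK; apply: IHn.
- by move: ltSn; rewrite cardS; lia.
- move=> y /S'P [yfx yx yS]; rewrite !inE fS // andbT.
  rewrite (inj_in_eq (can_in_inj fK)) // yx /=.
  by apply: contra yfx => /eqP <-; rewrite fK.
- by move=> y /S'P [_ _ yS]; apply: fK.
- by move=> y /S'P [_ _ yS]; apply: fx.
Qed.

Definition spine_rank (V : finType) (pos : V -> nat) (u : V) : nat :=
  #|[set y | pos y < pos u]|.

Definition pages_saturated (V : finType) (G : rel V) (k : nat) (pg : V -> V -> 'I_k) :=
  forall u (i : 'I_k), exists w, G u w && (pg u w == i).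

Section SaturatedMatchingBookEmbedding.

Variables (V : finType) (G : rel V) (k : nat) (pos : V -> nat) (pg : V -> V -> 'I_k).
Hypotheses (Gsym : symmetric G) (Girr : irreflexive G).
Hypothesis mbe : matching_book_embedding G pos pg.
Hypothesis saturated : pages_saturated G pg.

Let pos_inj : injective pos. Proof. by case: mbe. Qed.
Let pg_sym u v : G u v -> pg u v = pg v u. Proof. by case: mbe => _ sym _ _; apply: sym. Qed.
Let pg_matching u v w : G u v -> G u w -> pg u v = pg u w -> v = w.
Proof. by case: mbe => _ _ _ matching; apply: matching. Qed.
Let pg_noncrossing u v x y : G u v -> G x y -> pg u v = pg x y ->
  ~ [/\ pos u < pos x, pos x < pos v & pos v < pos y].
Proof. by case: mbe => _ _ noncrossing _; apply: noncrossing. Qed.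

Definition page_partner (i : 'I_k) (x : V) : V :=
  odflt x [pick w | G x w && (pg x w == i)].

Lemma page_partnerP i x : G x (page_partner i x) /\ pg x (page_partner i x) = i.
Proof.
rewrite /page_partner; case: pickP => [w /andP [? /eqP] // | none].
by have [w] := saturated x i; rewrite none.
Qed.

Lemma page_partner_neq i x : page_partner i x != x.
Proof. by have [+ _] := page_partnerP i x; apply: contraTneq => ->; rewrite Girr. Qed.

Lemma page_partnerK i : involutive (page_partner i).
Proof.
move=> x; have [Gxw pgxw] := page_partnerP i x.
have [Gww pgww] := page_partnerP i (page_partner i x).
by apply: pg_matching Gww _ _; rewrite 1?Gsym // pgww -pg_sym.
Qed.

Lemma page_partner_between u v x : G u v -> pos u < pos v ->
  pos u < pos x < pos v ->
  pos u < pos (page_partner (pg u v) x) < pos v.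
Proof.
move=> Guv ltuv /andP [ltux ltxv].
set w := page_partner _ x; have [Gxw pgxw] := page_partnerP (pg u v) x.
have partner_end y z : w = y -> G y z -> pg y z = pg u v -> x = z.
  move=> wy Gyz pgyz; subst y; apply: (@pg_matching w x z _ Gyz); first by rewrite Gsym.
  by rewrite -pg_sym // pgxw pgyz.
have wu : w != u.
  by apply/eqP => /partner_end /(_ Guv erefl) xv; rewrite xv ltnn in ltxv.
have wv : w != v.
  apply/eqP => wv; have := partner_end v u wv; rewrite Gsym -pg_sym //.
  by move=> /(_ Guv erefl) xu; rewrite xu ltnn in ltux.
have [ltwu | leuw] := ltnP (pos w) (pos u).
  case: (pg_noncrossing (u := w) (v := x) (x := u) (y := v)) => //; rewrite 1?Gsym //.
  by rewrite -pg_sym // pgxw.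
have [ltvw | lewv] := ltnP (pos v) (pos w).
  by case: (pg_noncrossing Guv Gxw (esym pgxw)).
have /negP puw : pos w != pos u by apply: contra wu => /eqP /pos_inj ->.
have /negP pvw : pos w != pos v by apply: contra wv => /eqP /pos_inj ->.
by apply/andP; split; lia.
Qed.

Lemma spine_rank_split u v : pos u < pos v ->
  spine_rank pos v = spine_rank pos u + #|[set y | pos u < pos y < pos v]|.+1.
Proof.
move=> ltuv; rewrite /spine_rank -(cardsID [set y | pos y < pos u]).
congr (_ + _).
  by apply: eq_card => y; rewrite !inE; case: ltnP => //; lia.
suff -> : [set y | pos y < pos v] :\: [set y | pos y < pos u] =
          u |: [set y | pos u < pos y < pos v] by rewrite cardsU1 inE ltnn.
apply/setP => y; rewrite !inE.
have [-> | neyu] := eqVneq y u; first by rewrite ltnn ltuv.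
have : pos y != pos u by apply: contra neyu => /eqP /pos_inj ->.
lia.
Qed.

Lemma spine_rank_parity u v : G u v ->
  odd (spine_rank pos u) != odd (spine_rank pos v).
Proof.
wlog ltuv : u v / pos u < pos v => [wlog_ltuv Guv|Guv].
  have [lt|gt|eq] := ltngtP (pos u) (pos v); first exact: wlog_ltuv.
    by rewrite eq_sym; apply: wlog_ltuv; rewrite 1?Gsym.
  by move: Guv; rewrite (pos_inj eq) Girr.
have between_even : ~~ odd #|[set y | pos u < pos y < pos v]|.
  apply: (@fixpointfree_involution_card_even _ (page_partner (pg u v))).
  - by move=> x; rewrite !inE; apply: page_partner_between.
  - by move=> x _; apply: page_partnerK.
  - by move=> x _; apply: page_partner_neq.
rewrite (spine_rank_split ltuv) addnS /= oddD.
by move: between_even; case: (odd #|_|); case: odd.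
Qed.

End SaturatedMatchingBookEmbedding.

Lemma matching_book_embedding_saturated (V : finType) (G : rel V) (k d : nat)
    (pos : V -> nat) (pg : V -> V -> 'I_k) :
  matching_book_embedding G pos pg -> (forall u, #|[set w | G u w]| = d) ->
  k <= d -> pages_saturated G pg.
Proof.
move=> [_ _ _ pg_matching] regG ledk u i.
have inj_pg : {in [set w | G u w] &, injective (pg u)}.
  by move=> x y; rewrite !inE => Gux Guy; apply: pg_matching.
have pages_onto : pg u @: [set w | G u w] = [set: 'I_k].
  apply/eqP; rewrite eqEcard subsetT cardsT card_ord card_in_imset // regG //.
have /imsetP [w] : i \in pg u @: [set w | G u w] by rewrite pages_onto inE.
by rewrite inE => Guw ->; exists w; rewrite Guw eqxx.
Qed.

Lemma max_degree_regular (V : finType) (G : rel V) (d : nat) :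
  (forall u, #|[set w | G u w]| = d) -> max_degree G <= d.
Proof. by move=> regG; apply/bigmax_leqP => v _; rewrite regG. Qed.

Lemma cart_prod_sym (V W : finType) (G : rel V) (B : rel W) :
  symmetric G -> symmetric B -> symmetric (cart_prod G B).
Proof. by move=> Gsym Bsym a b; rewrite /cart_prod Gsym Bsym eq_sym [_ == b.2]eq_sym. Qed.

Lemma cart_prod_irrefl (V W : finType) (G : rel V) (B : rel W) :
  irreflexive G -> irreflexive B -> irreflexive (cart_prod G B).
Proof. by move=> Girr Birr a; rewrite /cart_prod Girr Birr !andbF. Qed.

Lemma complete_graph_sym p : symmetric (complete_graph p).
Proof. by move=> x y; rewrite /complete_graph eq_sym. Qed.

Lemma complete_graph_irrefl p : irreflexive (complete_graph p).
Proof. by move=> x; rewrite /complete_graph eqxx. Qed.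

Lemma cycle_graph_sym q : symmetric (cycle_graph q).
Proof. by move=> x y; rewrite /cycle_graph eq_sym orbC. Qed.

Lemma cycle_graph_irrefl q : irreflexive (cycle_graph q).
Proof. by move=> x; rewrite /cycle_graph eqxx. Qed.

Lemma ordS_val n (i : 'I_n) : val (ordS i) = if i.+1 == n then 0 else i.+1.
Proof.
rewrite /=; case: eqP => [-> | neq]; first exact: modnn.
by rewrite modn_small //; have := ltn_ord i; lia.
Qed.

Lemma cycle_graphE q (x y : 'I_q) :
  cycle_graph q x y = (x != y) && ((y == ordS x) || (y == ord_pred x)).
Proof.
rewrite /cycle_graph; congr (_ && (_ || _)).
rewrite -[_ == _ %% q]/(x == ordS y); apply/eqP/eqP => [-> | ->]; last by rewrite ord_predK.
by rewrite ordSK.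
Qed.

Lemma cycle_graph_neighbours q (x : 'I_q) : 3 <= q ->
  [set y | cycle_graph q x y] = [set ordS x; ord_pred x].
Proof.
move=> q_ge3; apply/setP => y; rewrite !inE cycle_graphE andb_idl //.
have Sx_neq : ordS x != x.
  by rewrite -val_eqE ordS_val /=; have := ltn_ord x; case: (x.+1 =P q); lia.
case/orP => /eqP ->; first by rewrite eq_sym.
by apply: contra Sx_neq => /eqP {1}->; rewrite ord_predK.
Qed.

Lemma cycle_graph_degree q (x : 'I_q) : 3 <= q -> #|[set y | cycle_graph q x y]| = 2.
Proof.
move=> q_ge3; rewrite cycle_graph_neighbours // cards2.
suff -> : ordS x != ord_pred x by [].
apply/eqP => /(congr1 (@ordS q)).
rewrite ord_predK => /(congr1 val); rewrite !ordS_val; have := ltn_ord x.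
by case: (x.+1 =P q) => /=; case: eqP; lia.
Qed.

Lemma cart_prod_neighbours (V W : finType) (G : rel V) (B : rel W) (a : V) (b : W) :
  [set w | cart_prod G B (a, b) w] =
  setX [set a] [set y | B b y] :|: setX [set x | G a x] [set b].
Proof.
apply/setP => -[x y]; rewrite !inE /cart_prod /=.
by rewrite (eq_sym a) (eq_sym b) [G a x && _]andbC.
Qed.

Lemma cart_prod_degree (V W : finType) (G : rel V) (B : rel W) (dG dB : nat) :
  irreflexive G -> (forall a, #|[set x | G a x]| = dG) ->
  (forall b, #|[set y | B b y]| = dB) ->
  forall v, #|[set w | cart_prod G B v w]| = dB + dG.
Proof.
move=> Girr regG regB [a b]; rewrite cart_prod_neighbours cardsU !cardsX !cards1.
rewrite regG regB !mul1n muln1 -[RHS]subn0; congr (_ - _); apply/eqP.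
rewrite cards_eq0 -subset0; apply/subsetP => -[x y]; rewrite !inE /=.
by case/andP => /andP [/eqP -> _] /andP [+ _]; rewrite Girr.
Qed.

Lemma complete_graph_degree p (x : 'I_p) : #|[set y | complete_graph p x y]| = p.-1.
Proof.
have -> : [set y | complete_graph p x y] = [set~ x] by apply/setP => y; rewrite !inE eq_sym.
by rewrite cardsC1 card_ord.
Qed.

Theorem lemma2p2 (p q : nat) (hp : 3 <= p) (hq : 3 <= q) (k : nat) :
  has_mbe (cart_prod (complete_graph p) (cycle_graph q)) k ->
  max_degree (cart_prod (complete_graph p) (cycle_graph q)) + 1 <= k.
Proof.
move=> [pos [pg mbe]]; set G := cart_prod _ _.
have Girr : irreflexive G.
  by apply: cart_prod_irrefl; [apply: complete_graph_irrefl | apply: cycle_graph_irrefl].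
have Gsym : symmetric G.
  by apply: cart_prod_sym; [apply: complete_graph_sym | apply: cycle_graph_sym].
have regG u : #|[set w | G u w]| = 2 + p.-1.
  apply: cart_prod_degree => [|a|b]; first exact: complete_graph_irrefl.
    exact: complete_graph_degree.
  exact: cycle_graph_degree.
rewrite addn1; apply: leq_ltn_trans (max_degree_regular regG) _; rewrite ltnNge.
apply/negP => le_k_deg.
have parity := spine_rank_parity Gsym Girr mbe
  (matching_book_embedding_saturated mbe regG le_k_deg).
have [p0 p1 q0] : [/\ 0 < p, 1 < p & 0 < q] by split; lia.
pose x := (Ordinal p0, Ordinal q0); pose y := (Ordinal p1, Ordinal q0).
pose z := (Ordinal hp, Ordinal q0).
have [Gxy Gyz Gxz] : [/\ G x y, G y z & G x z] by [].
move: (parity x y Gxy) (parity y z Gyz) (parity x z Gxz).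
by case: odd; case: odd; case: odd.
Qed.
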